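(* $\frac{2}{11}\le\gamma^{L-LD}(\mathcal{T})\le\frac29$: every local locating-dominating code in the triangular grid has density at least $2/11$, and there is a local locating-dominating code in the triangular grid of density $2/9$.
   Context: The triangular grid $\mathcal{T}$ has vertex set $\mathbb{Z}^2$, with $\mathbf{u},\mathbf{v}$ adjacent iff $\mathbf{u}-\mathbf{v}\in\{(\pm1,0),(0,\pm1),(1,1),(-1,-1)\}$. For a nonempty $C\subseteq\mathbb{Z}^2$ and vertex $\mathbf{u}$, $I(\mathbf{u})=N[\mathbf{u}]\cap C$ where $N[\mathbf{u}]$ is the closed neighbourhood. $C$ is a local locating-dominating code if $I(\mathbf{u})\ne\emptyset$ for all $\mathbf{u}$ and $I(\mathbf{u})\ne I(\mathbf{v})$ for all adjacent $\mathbf{u},\mathbf{v}\notin C$. The density of $C$ is $D(C)=\limsup_{n\to\infty}|C\cap Q_n|/|Q_n|$ with $Q_n=\{(i,j)\in\mathbb{Z}^2:|i|\le n,|j|\le n\}$. $\gamma^{L-LD}(G)$ denotes the infimum of densities of local locating-dominating codes in $G$. *)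

From Stdlib Require Import Reals ZArith List ClassicalEpsilon.
From Coquelicot Require Import Coquelicot.
Open Scope R_scope.

Definition vtx := (Z * Z)%type.

Definition tri_adj (u v : vtx) : Prop :=
  let d := ((fst u - fst v)%Z, (snd u - snd v)%Z) in
  d = (1%Z, 0%Z) \/ d = ((-1)%Z, 0%Z) \/ d = (0%Z, 1%Z) \/ d = (0%Z, (-1)%Z)
  \/ d = (1%Z, 1%Z) \/ d = ((-1)%Z, (-1)%Z).

Definition closed_nbhd (u : vtx) (w : vtx) : Prop := w = u \/ tri_adj u w.

Definition I_set (C : vtx -> Prop) (u : vtx) (w : vtx) : Prop :=
  closed_nbhd u w /\ C w.

Definition local_LD_code (C : vtx -> Prop) : Prop :=
  (exists c, C c) /\
  (forall u, exists w, I_set C u w) /\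
  (forall u v, tri_adj u v -> ~ C u -> ~ C v ->
     ~ (forall w, I_set C u w <-> I_set C v w)).

Definition zrange (n : nat) : list Z :=
  map (fun k => (Z.of_nat k - Z.of_nat n)%Z) (seq 0 (2 * n + 1)).
Definition Q_list (n : nat) : list vtx := list_prod (zrange n) (zrange n).

Definition indicator (C : vtx -> Prop) (p : vtx) : R :=
  if excluded_middle_informative (C p) then 1 else 0.

Definition count_in_Q (C : vtx -> Prop) (n : nat) : R :=
  fold_right Rplus 0 (map (indicator C) (Q_list n)).

Definition card_Q (n : nat) : R := (INR (2 * n + 1)) ^ 2.

Definition density (C : vtx -> Prop) : Rbar :=
  LimSup_seq (fun n => count_in_Q C n / card_Q n).

(* Lower bound, by discharging: every vertex u spreads a unit charge equally over
   the codewords of I(u).  A codeword c receives at most 1 from itself, and its six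
   neighbours split into three adjacent pairs; two adjacent non-codewords cannot both
   have I = {c}, so each pair sends at most 1 + 1/2.  Thus every codeword receives at
   most 11/2, whence |Q_n| <= 11/2 |C ∩ Q_(n+1)|.
   Upper bound: (x, y) |-> y + 2x maps each closed neighbourhood bijectively onto
   seven consecutive integers, and the preimage of the integers congruent to 0 or 3
   modulo 9 is a local locating-dominating code; it has density 2/9. *)

From Stdlib Require Import Reals Lra Lia ZArith List ClassicalEpsilon.
From Coquelicot Require Import Coquelicot.
Open Scope R_scope.

Definition sumL {A : Type} (L : list A) (f : A -> R) : R := fold_right Rplus 0 (map f L).

Lemma sumL_app {A : Type} (L M : list A) f : sumL (L ++ M) f = sumL L f + sumL M f.
Proof. unfold sumL; induction L as [|a L IH]; cbn; [lra |]; rewrite IH; lra. Qed.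

Lemma sumL_ext {A : Type} (L : list A) f g :
  (forall x, In x L -> f x = g x) -> sumL L f = sumL L g.
Proof. intro H; unfold sumL; f_equal; apply map_ext_in, H. Qed.

Lemma sumL_le {A : Type} (L : list A) f g :
  (forall x, In x L -> f x <= g x) -> sumL L f <= sumL L g.
Proof.
  induction L as [|a L IH]; intro H; cbn; [lra |].
  pose proof (H a (or_introl eq_refl)); pose proof (IH (fun x Hx => H x (or_intror Hx))).
  unfold sumL in *; lra.
Qed.

Lemma sumL_nonneg {A : Type} (L : list A) f :
  (forall x, In x L -> 0 <= f x) -> 0 <= sumL L f.
Proof.
  unfold sumL; induction L as [|a L IH]; intro H; cbn; [lra |].
  pose proof (H a (or_introl eq_refl)); pose proof (IH (fun x Hx => H x (or_intror Hx))); lra.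
Qed.

Lemma sumL_plus {A : Type} (L : list A) f g :
  sumL L (fun x => f x + g x) = sumL L f + sumL L g.
Proof. unfold sumL; induction L; cbn; lra. Qed.

Lemma sumL_scal_l {A : Type} (L : list A) c f : sumL L (fun x => c * f x) = c * sumL L f.
Proof. unfold sumL; induction L; cbn; lra. Qed.

Lemma sumL_scal_r {A : Type} (L : list A) c f : sumL L (fun x => f x * c) = sumL L f * c.
Proof. unfold sumL; induction L; cbn; lra. Qed.

Lemma sumL_const {A : Type} (L : list A) c : sumL L (fun _ => c) = INR (length L) * c.
Proof. unfold sumL; induction L; cbn [length]; [cbn; lra | rewrite S_INR; cbn; lra]. Qed.

Lemma sumL_map {A B : Type} (g : B -> A) (L : list B) f :
  sumL (map g L) f = sumL L (fun x => f (g x)).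
Proof. unfold sumL; now rewrite map_map. Qed.

Lemma sumL_list_prod {A B : Type} (L : list A) (M : list B) F :
  sumL (list_prod L M) F = sumL L (fun x => sumL M (fun y => F (x, y))).
Proof.
  induction L as [|a L IH]; [reflexivity |].
  cbn [list_prod]; rewrite sumL_app, sumL_map, IH; reflexivity.
Qed.

Lemma sumL_swap {A B : Type} (L : list A) (M : list B) F :
  sumL L (fun x => sumL M (F x)) = sumL M (fun y => sumL L (fun x => F x y)).
Proof.
  induction L as [|a L IH]; cbn.
  - rewrite sumL_const; lra.
  - unfold sumL at 1 in IH; cbn; rewrite IH, <- sumL_plus; reflexivity.
Qed.

Lemma sumL_ge_member {A : Type} (L : list A) f a :
  (forall x, In x L -> 0 <= f x) -> In a L -> f a <= sumL L f.
Proof.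
  induction L as [|b L IH]; intros H Ha; [destruct Ha |].
  pose proof (sumL_nonneg L f (fun x Hx => H x (or_intror Hx))).
  pose proof (H b (or_introl eq_refl)).
  destruct Ha as [<- | Ha]; cbn; fold (sumL L f); [lra |].
  pose proof (IH (fun x Hx => H x (or_intror Hx)) Ha); lra.
Qed.

Lemma sumL_ge_two {A : Type} (L : list A) f a b : NoDup L ->
  (forall x, In x L -> 0 <= f x) -> In a L -> In b L -> a <> b -> f a + f b <= sumL L f.
Proof.
  induction L as [|c L IH]; intros HL H Ha Hb Hab; [destruct Ha |].
  inversion_clear HL as [|? ? HcL HL'].
  assert (H' : forall x, In x L -> 0 <= f x) by (intros; apply H; now right).
  cbn; fold (sumL L f).
  destruct Ha as [<- | Ha], Hb as [<- | Hb].
  - contradiction.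
  - pose proof (sumL_ge_member L f b H' Hb); lra.
  - pose proof (sumL_ge_member L f a H' Ha); lra.
  - pose proof (IH HL' H' Ha Hb Hab); pose proof (H c (or_introl eq_refl)); lra.
Qed.

Fixpoint zseq (a : Z) (k : nat) : list Z :=
  match k with O => nil | S k => a :: zseq (a + 1) k end.

Lemma zseq_length a k : length (zseq a k) = k.
Proof. revert a; induction k; intro a; cbn; auto. Qed.

Lemma zseq_app a k m : zseq a (k + m) = zseq a k ++ zseq (a + Z.of_nat k) m.
Proof.
  revert a; induction k as [|k IH]; intro a; cbn.
  - now rewrite Z.add_0_r.
  - rewrite IH; do 3 f_equal; lia.
Qed.

Lemma map_add_zseq a k e : map (fun t => (t + e)%Z) (zseq a k) = zseq (a + e) k.
Proof.
  revert a; induction k as [|k IH]; intro a; cbn; [reflexivity |].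
  rewrite IH; do 2 f_equal; lia.
Qed.

Lemma sumL_zseq_shift a k e g :
  sumL (zseq a k) (fun t => g (t + e)%Z) = sumL (zseq (a + e) k) g.
Proof. now rewrite <- map_add_zseq, sumL_map. Qed.

Lemma sumL_zseq_window g a b k k' : (forall t, 0 <= g t) ->
  (a <= b)%Z -> (b + Z.of_nat k <= a + Z.of_nat k')%Z ->
  sumL (zseq b k) g <= sumL (zseq a k') g.
Proof.
  intros Hg Hab Hk.
  set (p := Z.to_nat (b - a)); set (r := (k' - p - k)%nat).
  replace k' with (p + (k + r))%nat by (unfold r, p; lia).
  rewrite !zseq_app, !sumL_app.
  replace (a + Z.of_nat p)%Z with b by (unfold p; lia).
  pose proof (sumL_nonneg (zseq a p) g (fun t _ => Hg t)).
  pose proof (sumL_nonneg (zseq (b + Z.of_nat k) r) g (fun t _ => Hg t)).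
  lra.
Qed.

Lemma map_seq_zseq c s k :
  map (fun i => (Z.of_nat i - c)%Z) (seq s k) = zseq (Z.of_nat s - c) k.
Proof.
  revert s; induction k as [|k IH]; intro s; cbn; [reflexivity |].
  rewrite IH; do 2 f_equal; lia.
Qed.

Lemma zrange_zseq n : zrange n = zseq (- Z.of_nat n) (2 * n + 1).
Proof. unfold zrange; now rewrite map_seq_zseq. Qed.

Definition vadd (u d : vtx) : vtx := ((fst u + fst d)%Z, (snd u + snd d)%Z).
Definition vsub (u d : vtx) : vtx := ((fst u - fst d)%Z, (snd u - snd d)%Z).

Lemma vsub_vadd u d : vsub (vadd u d) d = u.
Proof. destruct u, d; unfold vadd, vsub; cbn; f_equal; lia. Qed.

Lemma sumL_Q_list n F : sumL (Q_list n) F =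
  sumL (zseq (- Z.of_nat n) (2 * n + 1))
    (fun i => sumL (zseq (- Z.of_nat n) (2 * n + 1)) (fun j => F (i, j))).
Proof. unfold Q_list; rewrite zrange_zseq; apply sumL_list_prod. Qed.

Lemma card_Q_length n : card_Q n = INR (length (Q_list n)).
Proof.
  unfold card_Q, Q_list, vtx.
  rewrite length_prod, zrange_zseq, zseq_length, mult_INR; ring.
Qed.

Lemma sumL_Q_list_vadd_le n F d : (forall u, 0 <= F u) ->
  (-1 <= fst d <= 1)%Z -> (-1 <= snd d <= 1)%Z ->
  sumL (Q_list n) (fun u => F (vadd u d)) <= sumL (Q_list (S n)) F.
Proof.
  intros HF Hd1 Hd2; rewrite !sumL_Q_list; unfold vadd; cbn [fst snd].
  set (row i := sumL (zseq (- Z.of_nat (S n)) (2 * S n + 1)) (fun j => F (i, j))).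
  apply Rle_trans with (sumL (zseq (- Z.of_nat n) (2 * n + 1)) (fun i => row (i + fst d)%Z)).
  - apply sumL_le; intros i _; unfold row.
    rewrite (sumL_zseq_shift _ _ _ (fun j => F ((i + fst d)%Z, j))).
    apply sumL_zseq_window; [intro; apply HF | lia | lia].
  - rewrite sumL_zseq_shift; apply sumL_zseq_window; [| lia | lia].
    intro; apply sumL_nonneg; intros; apply HF.
Qed.

Lemma is_lim_seq_odd_inv (a b : R) : is_lim_seq (fun n => a + b / INR (2 * n + 1)) a.
Proof.
  assert (Hodd : is_lim_seq (fun n => INR (2 * n + 1)) p_infty).
  { apply is_lim_seq_le_p_loc with (u := INR); [| apply is_lim_seq_INR].
    exists O; intros n _; apply le_INR; lia. }
  pose proof (is_lim_seq_scal_l _ b _ (is_lim_seq_inv _ _ Hodd ltac:(discriminate))) as Hb.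
  pose proof (is_lim_seq_plus' _ _ a _ (is_lim_seq_const a) Hb) as H.
  cbn in H; rewrite Rmult_0_r, Rplus_0_r in H; exact H.
Qed.

Definition adj_offsets : list vtx :=
  ((1, 0) :: (-1, 0) :: (0, 1) :: (0, -1) :: (1, 1) :: (-1, -1) :: nil)%Z.
Definition nbhd_offsets : list vtx := (0, 0)%Z :: adj_offsets.

Ltac grid :=
  intros; repeat match goal with p : vtx |- _ => destruct p end;
  unfold closed_nbhd, tri_adj, nbhd_offsets, adj_offsets, vadd, vsub, vtx in *; cbn in *;
  rewrite ?pair_equal_spec in *; lia.

Lemma nbhd_offsets_NoDup : NoDup nbhd_offsets.
Proof. repeat constructor; cbn; intuition discriminate. Qed.

Lemma tri_adj_vsub u v : tri_adj u v <-> In (vsub v u) adj_offsets.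
Proof. split; grid. Qed.

Lemma closed_nbhd_vsub u w : closed_nbhd u w <-> In (vsub w u) nbhd_offsets.
Proof. split; grid. Qed.

Lemma closed_nbhd_vadd u d : In d nbhd_offsets -> closed_nbhd u (vadd u d).
Proof. intro Hd; apply closed_nbhd_vsub; grid. Qed.

Lemma vadd_vsub u w : vadd u (vsub w u) = w.
Proof. grid. Qed.

Lemma indicator_nonneg C p : 0 <= indicator C p.
Proof. unfold indicator; destruct excluded_middle_informative; lra. Qed.

Lemma indicator_in C p : C p -> indicator C p = 1.
Proof. unfold indicator; destruct excluded_middle_informative; tauto. Qed.

Lemma indicator_out C p : ~ C p -> indicator C p = 0.
Proof. unfold indicator; destruct excluded_middle_informative; tauto. Qed.

Definition nbhd_count (C : vtx -> Prop) (u : vtx) : R :=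
  sumL nbhd_offsets (fun d => indicator C (vadd u d)).

Lemma nbhd_count_ge C u p : closed_nbhd u p -> indicator C p <= nbhd_count C u.
Proof.
  rewrite closed_nbhd_vsub; intro Hp; rewrite <- (vadd_vsub u p) at 1.
  apply (sumL_ge_member _ (fun d => indicator C (vadd u d))); auto using indicator_nonneg.
Qed.

Lemma nbhd_count_ge_two C u p q : closed_nbhd u p -> closed_nbhd u q -> p <> q ->
  indicator C p + indicator C q <= nbhd_count C u.
Proof.
  rewrite !closed_nbhd_vsub; intros Hp Hq Hpq.
  rewrite <- (vadd_vsub u p) at 1; rewrite <- (vadd_vsub u q) at 1.
  apply (sumL_ge_two _ (fun d => indicator C (vadd u d)));
    auto using nbhd_offsets_NoDup, indicator_nonneg.
  intro E; apply Hpq; now rewrite <- (vadd_vsub u p), <- (vadd_vsub u q), E.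
Qed.

(* The charge sent by [u] to each codeword of [I(u)]; it is [0] (as [/ 0 = 0]) when
   [I(u)] is empty, which never happens for a code. *)
Definition share (C : vtx -> Prop) (u : vtx) : R := / nbhd_count C u.

Lemma share_nonneg C u : 0 <= share C u.
Proof.
  unfold share; destruct (Req_dec (nbhd_count C u) 0) as [E | E].
  - rewrite E, Rinv_0; lra.
  - assert (0 <= nbhd_count C u) by (apply sumL_nonneg; auto using indicator_nonneg).
    apply Rlt_le, Rinv_0_lt_compat; lra.
Qed.

Lemma share_le_1 C u p : I_set C u p -> share C u <= 1.
Proof.
  intros [Hp Cp]; pose proof (nbhd_count_ge C u p Hp) as H.
  rewrite indicator_in in H by exact Cp.
  unfold share; rewrite <- Rinv_1; apply Rinv_le_contravar; lra.
Qed.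

Lemma share_le_half C u : 2 <= nbhd_count C u -> share C u <= 1 / 2.
Proof. intro H; unfold share, Rdiv; rewrite Rmult_1_l; apply Rinv_le_contravar; lra. Qed.

Lemma sumL_indicator_share C u p : I_set C u p ->
  sumL nbhd_offsets (fun d => indicator C (vadd u d) * share C u) = 1.
Proof.
  intros [Hp Cp]; pose proof (nbhd_count_ge C u p Hp) as H.
  rewrite indicator_in in H by exact Cp.
  rewrite sumL_scal_r; apply Rinv_r; unfold nbhd_count in H; lra.
Qed.

Lemma share_adjacent_pair_le C c u v : local_LD_code C -> C c ->
  closed_nbhd u c -> closed_nbhd v c -> tri_adj u v -> u <> c -> v <> c ->
  share C u + share C v <= 3 / 2.
Proof.
  intros [_ [_ Hloc]] Hc Hu Hv Huv Huc Hvc.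
  assert (Hle1 : forall x, closed_nbhd x c -> share C x <= 1)
    by (intros x Hx; apply share_le_1 with c; now split).
  destruct (Rle_or_lt 2 (nbhd_count C u)) as [Lu | Lu].
  { pose proof (share_le_half C u Lu); pose proof (Hle1 v Hv); lra. }
  destruct (Rle_or_lt 2 (nbhd_count C v)) as [Lv | Lv].
  { pose proof (share_le_half C v Lv); pose proof (Hle1 u Hu); lra. }
  assert (Honly : forall x, nbhd_count C x < 2 -> closed_nbhd x c ->
            forall p, I_set C x p -> p = c).
  { intros x Lx Hx p [Hp Cp].
    destruct (excluded_middle_informative (p = c)) as [E | E]; [exact E |].
    pose proof (nbhd_count_ge_two C x p c Hp Hx E) as H.
    rewrite !indicator_in in H by assumption; lra. }
  assert (Hnot : forall x, nbhd_count C x < 2 -> closed_nbhd x c -> x <> c -> ~ C x)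
    by (intros x Lx Hx Hxc Cx; exact (Hxc (Honly x Lx Hx x (conj (or_introl eq_refl) Cx)))).
  exfalso; apply (Hloc u v Huv (Hnot u Lu Hu Huc) (Hnot v Lv Hv Hvc)).
  intro w; split; intro Hw.
  - rewrite (Honly u Lu Hu w Hw); now split.
  - rewrite (Honly v Lv Hv w Hw); now split.
Qed.

Definition charge (C : vtx -> Prop) (c : vtx) : R :=
  sumL nbhd_offsets (fun d => share C (vsub c d)).

(* The six neighbours of [c] form three adjacent pairs, each sending at most [1 + 1/2]. *)
Lemma charge_le C c : local_LD_code C -> C c -> charge C c <= 11 / 2.
Proof.
  intros HC Hc.
  assert (Hself : share C (vsub c (0, 0)%Z) <= 1)
    by (apply share_le_1 with c; split; [grid | exact Hc]).
  assert (Hpair : forall d e, closed_nbhd (vsub c d) c -> closed_nbhd (vsub c e) c ->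
            tri_adj (vsub c d) (vsub c e) -> vsub c d <> c -> vsub c e <> c ->
            share C (vsub c d) + share C (vsub c e) <= 3 / 2)
    by (intros; eapply share_adjacent_pair_le; eauto).
  assert (share C (vsub c (-1, 0)%Z) + share C (vsub c (-1, -1)%Z) <= 3 / 2)
    by (apply Hpair; grid).
  assert (share C (vsub c (0, -1)%Z) + share C (vsub c (1, 0)%Z) <= 3 / 2)
    by (apply Hpair; grid).
  assert (share C (vsub c (1, 1)%Z) + share C (vsub c (0, 1)%Z) <= 3 / 2)
    by (apply Hpair; grid).
  unfold charge, sumL, nbhd_offsets, adj_offsets; cbn; lra.
Qed.

Lemma nbhd_offsets_small d :
  In d nbhd_offsets -> (-1 <= fst d <= 1)%Z /\ (-1 <= snd d <= 1)%Z.
Proof. intro Hd; cbn in Hd; intuition (subst; cbn; lia). Qed.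

Lemma card_Q_le_count C n : local_LD_code C -> card_Q n <= 11 / 2 * count_in_Q C (S n).
Proof.
  intro HC; pose proof HC as [_ [Hdom _]].
  assert (Hunit : card_Q n = sumL (Q_list n)
            (fun u => sumL nbhd_offsets (fun d => indicator C (vadd u d) * share C u))).
  { rewrite card_Q_length, <- (Rmult_1_r (INR _)), <- sumL_const.
    apply sumL_ext; intros u _; destruct (Hdom u) as [p Hp].
    symmetry; exact (sumL_indicator_share C u p Hp). }
  rewrite Hunit, sumL_swap.
  apply Rle_trans with (sumL nbhd_offsets
    (fun d => sumL (Q_list (S n)) (fun c => indicator C c * share C (vsub c d)))).
  - apply sumL_le; intros d Hd; destruct (nbhd_offsets_small d Hd).
    rewrite (sumL_ext _ _ (fun u => (fun c => indicator C c * share C (vsub c d)) (vadd u d)))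
      by (intros; now rewrite vsub_vadd).
    apply (sumL_Q_list_vadd_le n (fun c => indicator C c * share C (vsub c d)) d);
      [| tauto | tauto].
    intro; apply Rmult_le_pos; auto using indicator_nonneg, share_nonneg.
  - rewrite <- sumL_swap; unfold count_in_Q; fold (sumL (Q_list (S n)) (indicator C)).
    rewrite <- sumL_scal_l; apply sumL_le; intros c _.
    rewrite sumL_scal_l; fold (charge C c).
    destruct (excluded_middle_informative (C c)) as [Cc | Cc].
    + rewrite indicator_in by exact Cc; pose proof (charge_le C c HC Cc); lra.
    + rewrite indicator_out by exact Cc; lra.
Qed.

Lemma local_LD_density_ge C : local_LD_code C -> Rbar_le (2 / 11) (density C).
Proof.
  intro HC; unfold density.
  apply Rbar_le_trans with (LimSup_seq (fun n => 2 / 11 + (-8 / 11) / INR (2 * n + 1))).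
  { rewrite (is_LimSup_seq_unique _ _ (is_lim_LimSup_seq _ _ (is_lim_seq_odd_inv _ _))).
    cbn; lra. }
  apply LimSup_le; exists 1%nat; intros [|n] Hn; [lia |].
  pose proof (card_Q_le_count C n HC) as Hcount; unfold card_Q in *.
  set (K := INR (2 * n + 1)) in *.
  assert (HK : 1 <= K) by (unfold K; rewrite <- INR_1; apply le_INR; lia).
  replace (INR (2 * S n + 1)) with (K + 2)
    by (unfold K; rewrite <- (plus_INR _ 2); f_equal; lia).
  apply Rmult_le_reg_r with ((K + 2) ^ 2); [apply pow_lt; lra |].
  replace (count_in_Q C (S n) / (K + 2) ^ 2 * (K + 2) ^ 2) with (count_in_Q C (S n))
    by (field; lra).
  replace ((2 / 11 + -8 / 11 / (K + 2)) * (K + 2) ^ 2) with (2 / 11 * (K ^ 2 - 4))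
    by (field; lra).
  lra.
Qed.

Lemma sumL_zseq_rotate g a k :
  g a + sumL (zseq (a + 1) k) g = sumL (zseq a k) g + g (a + Z.of_nat k)%Z.
Proof.
  change (g a + sumL (zseq (a + 1) k) g) with (sumL (zseq a (S k)) g).
  rewrite <- Nat.add_1_r, zseq_app, sumL_app; cbn; lra.
Qed.

Section PeriodicSums.

Variables (h : Z -> R) (p : nat).
Hypothesis h_periodic : forall t, h (t + Z.of_nat p)%Z = h t.
Hypothesis h_bounds : forall t, 0 <= h t <= 1.

Lemma sumL_zseq_period a : sumL (zseq a p) h = sumL (zseq 0 p) h.
Proof.
  assert (Hstep : forall b, sumL (zseq (b + 1) p) h = sumL (zseq b p) h).
  { intro b; pose proof (sumL_zseq_rotate h b p) as Hrot; rewrite h_periodic in Hrot; lra. }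
  induction a as [|a IH|a IH] using Z.peano_ind; [reflexivity | |].
  - now rewrite <- Z.add_1_r, Hstep.
  - now rewrite <- IH, <- (Hstep (Z.pred a)), Z.add_1_r, Z.succ_pred.
Qed.

Lemma sumL_zseq_periods a q : sumL (zseq a (q * p)) h = INR q * sumL (zseq 0 p) h.
Proof.
  revert a; induction q as [|q IH]; intro a; [cbn; lra |].
  rewrite Nat.mul_succ_l, zseq_app, sumL_app, IH, (sumL_zseq_period (a + _)), S_INR; lra.
Qed.

Lemma sumL_zseq_periodic_bounds a L : (0 < p)%nat ->
  let P := sumL (zseq 0 p) h in
  P * (INR L - INR p) / INR p <= sumL (zseq a L) h <= P * INR L / INR p + INR p.
Proof.
  intros Hp P.
  assert (HP : 0 <= P) by (apply sumL_nonneg; intros; apply h_bounds).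
  assert (Hp' : 0 < INR p) by (apply lt_0_INR; exact Hp).
  set (q := (L / p)%nat); set (r := (L mod p)%nat).
  assert (HL : L = (q * p + r)%nat) by (unfold q, r; pose proof (Nat.div_mod_eq L p); lia).
  assert (Hr : INR r < INR p) by (apply lt_INR, Nat.mod_upper_bound; lia).
  assert (Hrest : 0 <= sumL (zseq (a + Z.of_nat (q * p)) r) h <= INR r).
  { split; [apply sumL_nonneg; intros; apply h_bounds |].
    replace (INR r) with (INR (length (zseq (a + Z.of_nat (q * p)) r)) * 1)
      by (rewrite zseq_length; ring).
    rewrite <- sumL_const.
    apply sumL_le; intros; apply h_bounds. }
  rewrite HL, zseq_app, sumL_app, sumL_zseq_periods; fold P.
  rewrite plus_INR, mult_INR.
  replace (P * (INR q * INR p + INR r - INR p) / INR p)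
    with (INR q * P - P * ((INR p - INR r) / INR p)) by (field; lra).
  replace (P * (INR q * INR p + INR r) / INR p)
    with (INR q * P + P * (INR r / INR p)) by (field; lra).
  assert (0 <= P * ((INR p - INR r) / INR p))
    by (apply Rmult_le_pos; [| apply Rdiv_le_0_compat]; lra).
  assert (0 <= P * (INR r / INR p))
    by (apply Rmult_le_pos; [| apply Rdiv_le_0_compat]; lra).
  lra.
Qed.

End PeriodicSums.

(* Under [phi] the closed neighbourhood of [u] is mapped onto the seven integers
   [phi u - 3, ..., phi u + 3].  The code is the preimage of the residues 0 and 3
   modulo 9; membership of [u + e] depends only on [phi u mod 9] and [e], so the
   local conditions reduce to a finite check over the nine residues. *)
Definition phi (p : vtx) : Z := (snd p + 2 * fst p)%Z.
Definition marked (t : Z) : bool := orb (t mod 9 =? 0)%Z (t mod 9 =? 3)%Z.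
Definition code29 (p : vtx) : Prop := marked (phi p) = true.

Lemma phi_vadd u d : phi (vadd u d) = (phi u + phi d)%Z.
Proof. unfold phi, vadd; cbn [fst snd]; lia. Qed.

Lemma marked_mod_l s e : marked (s mod 9 + e) = marked (s + e).
Proof. unfold marked; now rewrite Z.add_mod_idemp_l. Qed.

Lemma marked_mod s : marked (s mod 9) = marked s.
Proof. unfold marked; now rewrite Zmod_mod. Qed.

Lemma marked_add_9 t : marked (t + 9) = marked t.
Proof.
  unfold marked; replace (t + 9)%Z with (t + 1 * 9)%Z by ring.
  now rewrite Z_mod_plus_full.
Qed.

Lemma vsub_vadd_l u e : vsub (vadd u e) u = e.
Proof. grid. Qed.

Lemma vsub_vadd_vadd u e d : vsub (vadd u e) (vadd u d) = vsub e d.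
Proof. grid. Qed.

Definition vtx_eq_dec (u v : vtx) : {u = v} + {u <> v}.
Proof. decide equality; apply Z.eq_dec. Defined.

Definition in_nbhd_offsets (d : vtx) : bool :=
  if in_dec vtx_eq_dec d nbhd_offsets then true else false.

Lemma in_nbhd_offsets_spec d : in_nbhd_offsets d = true <-> In d nbhd_offsets.
Proof. unfold in_nbhd_offsets; destruct in_dec; intuition discriminate. Qed.

Definition dominated_at (r : Z) : bool := existsb (fun e => marked (r + phi e)) nbhd_offsets.

(* Some codeword [u + e] lies in exactly one of N[u] and N[u + d]. *)
Definition separated_at (r : Z) (d : vtx) : bool :=
  existsb (fun e => (marked (r + phi e) &&
                     xorb (in_nbhd_offsets e) (in_nbhd_offsets (vsub e d)))%bool)
    (nbhd_offsets ++ map (vadd d) nbhd_offsets).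

Definition residue_ok (r : Z) : bool :=
  (dominated_at r &&
   forallb (fun d => marked r || marked (r + phi d) || separated_at r d) adj_offsets)%bool.

Lemma residue_ok_mod9 r : (0 <= r < 9)%Z -> residue_ok r = true.
Proof.
  intro Hr.
  assert (r = 0 \/ r = 1 \/ r = 2 \/ r = 3 \/ r = 4 \/ r = 5 \/ r = 6 \/ r = 7 \/ r = 8)%Z
    as Hcases by lia.
  repeat destruct Hcases as [-> | Hcases]; [..| subst]; vm_compute; reflexivity.
Qed.

Lemma code29_local_LD : local_LD_code code29.
Proof.
  assert (Hok : forall u, residue_ok (phi u mod 9) = true)
    by (intro; apply residue_ok_mod9, Z.mod_pos_bound; lia).
  assert (Hcode : forall u e, code29 (vadd u e) <-> marked (phi u mod 9 + phi e) = true)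
    by (intros; unfold code29; now rewrite phi_vadd, marked_mod_l).
  split; [exists (0, 0)%Z; reflexivity |]; split.
  - intro u; destruct (andb_prop _ _ (Hok u)) as [Hdom _].
    apply existsb_exists in Hdom as [e [He Hm]].
    exists (vadd u e); split; [now apply closed_nbhd_vadd | now apply Hcode].
  - intros u v Huv Hu Hv HI.
    set (d := vsub v u).
    assert (Hv' : v = vadd u d) by (unfold d; now rewrite vadd_vsub).
    assert (Hsep : forall b, In b adj_offsets ->
              (marked (phi u mod 9) || marked (phi u mod 9 + phi b)
               || separated_at (phi u mod 9) b)%bool = true)
      by (apply forallb_forall; exact (proj2 (andb_prop _ _ (Hok u)))).
    specialize (Hsep d (proj1 (tri_adj_vsub u v) Huv)).
    rewrite marked_mod, (Bool.not_true_is_false _ Hu) in Hsep.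
    rewrite Hv', Hcode in Hv; rewrite (Bool.not_true_is_false _ Hv) in Hsep; cbn [orb] in Hsep.
    apply existsb_exists in Hsep as [e [_ He]]; apply andb_prop in He as [Hm Hx].
    specialize (HI (vadd u e)); unfold I_set in HI.
    rewrite Hv', !closed_nbhd_vsub, vsub_vadd_l, vsub_vadd_vadd in HI.
    rewrite <- !in_nbhd_offsets_spec in HI.
    apply Hcode in Hm.
    destruct (in_nbhd_offsets e), (in_nbhd_offsets (vsub e d)); cbn in Hx;
      try discriminate; intuition.
Qed.

Definition marked_weight (t : Z) : R := if marked t then 1 else 0.

Lemma indicator_code29 p : indicator code29 p = marked_weight (phi p).
Proof.
  unfold indicator, marked_weight, code29.
  destruct excluded_middle_informative; destruct (marked (phi p)); congruence.
Qed.

Lemma marked_weight_row_bounds a L :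
  2 * (INR L - 9) / 9 <= sumL (zseq a L) marked_weight <= 2 * INR L / 9 + 9.
Proof.
  assert (Hper : forall t, marked_weight (t + Z.of_nat 9)%Z = marked_weight t)
    by (intro; unfold marked_weight; now rewrite marked_add_9).
  assert (Hbounds : forall t, 0 <= marked_weight t <= 1)
    by (intro; unfold marked_weight; destruct marked; lra).
  pose proof (sumL_zseq_periodic_bounds _ _ Hper Hbounds a L ltac:(lia)) as H; cbv zeta in H.
  replace (sumL (zseq 0 9) marked_weight) with 2 in H
    by (unfold sumL, marked_weight; cbn; lra).
  replace (INR 9) with 9 in H by (cbn; lra); exact H.
Qed.

Lemma code29_density : density code29 = 2 / 9.
Proof.
  unfold density; apply is_LimSup_seq_unique, is_lim_LimSup_seq.
  apply is_lim_seq_le_le with (u := fun n => 2 / 9 + -2 / INR (2 * n + 1))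
                              (w := fun n => 2 / 9 + 9 / INR (2 * n + 1));
    [| apply is_lim_seq_odd_inv | apply is_lim_seq_odd_inv].
  intro n; unfold count_in_Q, card_Q; fold (sumL (Q_list n) (indicator code29)).
  rewrite sumL_Q_list; set (L := (2 * n + 1)%nat).
  assert (HL : 1 <= INR L) by (rewrite <- INR_1; apply le_INR; unfold L; lia).
  assert (Hrow : forall i,
            2 * (INR L - 9) / 9 <= sumL (zseq (- Z.of_nat n) L) (fun j => indicator code29 (i, j))
            <= 2 * INR L / 9 + 9).
  { intro i; rewrite (sumL_ext _ _ (fun j => marked_weight (j + 2 * i)%Z))
      by (intros; now rewrite indicator_code29).
    rewrite sumL_zseq_shift; apply marked_weight_row_bounds. }
  set (X := sumL _ _).
  assert (Hlo : INR L * (2 * (INR L - 9) / 9) <= X).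
  { rewrite <- (zseq_length (- Z.of_nat n) L) at 1; rewrite <- sumL_const.
    apply sumL_le; intros; apply Hrow. }
  assert (Hhi : X <= INR L * (2 * INR L / 9 + 9)).
  { rewrite <- (zseq_length (- Z.of_nat n) L) at 1; rewrite <- sumL_const.
    apply sumL_le; intros; apply Hrow. }
  set (K := INR L) in *.
  replace (2 / 9 + -2 / K) with (K * (2 * (K - 9) / 9) / K ^ 2) by (field; lra).
  replace (2 / 9 + 9 / K) with (K * (2 * K / 9 + 9) / K ^ 2) by (field; lra).
  assert (0 < K ^ 2) by (apply pow_lt; lra).
  unfold Rdiv at 1 3 5; split; apply Rmult_le_compat_r; try apply Rlt_le, Rinv_0_lt_compat; lra.
Qed.

Theorem mainTheorem15 :
  (forall C : vtx -> Prop, local_LD_code C -> Rbar_le (Finite (2 / 11)) (density C))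
  /\ (exists C : vtx -> Prop, local_LD_code C /\ density C = Finite (2 / 9)).
Proof.
  split.
  - exact local_LD_density_ge.
  - exists code29; split; [exact code29_local_LD | exact code29_density].
Qed.
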